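(* Let $k\ge 1$ and $n\ge 2k+1$. The map $f:X_{n,k}\to X_{n,k}$ is a bijection, and for every $x\in X_{n,k}$ the strings $x$ and $f(x)$ have no $1$ at a common position, $f(x)\neq x$ and $f^2(x)\ne x$. Consequently, for every $x\in X_{n,k}$ the sequence $C(x)=(x,f(x),f^2(x),\dots)$, continued until $x$ reappears, is a cycle of length at least $3$ in $K(n,k)$ (vertices identified with characteristic vectors), and these cycles partition the vertex set.
   Context: $X_{n,k}$ is the set of binary strings of length $n$ with exactly $k$ ones; a $k$-subset of $[n]$ is identified with its characteristic vector, so two vertices of the Kneser graph $K(n,k)$ are adjacent iff their strings have no $1$ at a common position. Positions are taken cyclically modulo $n$. Cyclic parenthesis matching: regard $x$ as a cyclic string, $1$s as opening and $0$s as closing brackets; each $1$ at position $i$ is matched to the last $0$ of the shortest cyclic substring starting at position $i$ and going to the right that contains equally many $0$s and $1$s. Since $n\ge 2k+1$, every $1$ is matched and exactly $n-2k$ zeros are unmatched. $f(x)$ is obtained from $x$ by complementing all matched bits (matched $1$s and matched $0$s), leaving unmatched $0$s unchanged. *)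

From mathcomp Require Import all_boot.
Set Implicit Arguments. Unset Strict Implicit. Unset Printing Implicit Defensive.

Section Kneser.
Variable n : nat.

Definition cbit (x : n.-tuple bool) (m : nat) : bool := nth false x (m %% n).

(* X_{n,k}: strings with exactly k ones (characteristic vectors of k-subsets). *)
Definition Xnk (k : nat) : {set n.-tuple bool} := [set x : n.-tuple bool | count id x == k].

Definition kadj : rel (n.-tuple bool) :=
  fun x y => [forall i : 'I_n, ~~ (tnth x i && tnth y i)].

Definition ones_in (x : n.-tuple bool) (i l : nat) : nat :=
  \sum_(0 <= d < l) cbit x (i + d).

Definition balanced (x : n.-tuple bool) (i l : nat) : bool :=
  (0 < l <= n) && ((ones_in x i l).*2 == l).

Definition matched1 (x : n.-tuple bool) (i : nat) : bool :=
  cbit x i && has (balanced x i) (iota 1 n).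

(* position of the last 0 of the shortest balanced substring starting at i:
   its length is (find ... ).+1, so its last position is i + find ... *)
Definition match_pos (x : n.-tuple bool) (i : nat) : nat :=
  (i + find (balanced x i) (iota 1 n)) %% n.

Definition matched (x : n.-tuple bool) (j : nat) : bool :=
  matched1 x j ||
  (~~ cbit x j && [exists i : 'I_n, matched1 x i && (match_pos x i == j)]).

Definition fK (x : n.-tuple bool) : n.-tuple bool :=
  [tuple (if matched x j then ~~ tnth x j else tnth x j) | j < n].

End Kneser.

(* Read a 1 as a step up and a 0 as a step down: the height H of x then drifts by
   2k - n < 0 per period.  A 1 at i is matched to the first return of H to the level
   H(i), and (looking at positions t >= n, so that a whole period lies behind t) a 0
   at t is unmatched exactly when its down-step reaches a new running minimum M.
   Hence f(x) is the string of height 2M - H: it has k ones, is disjoint from x and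
   determines x (a 1 of x becomes a 0 of f(x) whose level recurs within n steps, an
   unmatched 0 of x stays a 0 whose level never recurs).  Being injective on the finite
   set X_{n,k}, f is a bijection, whose orbits partition X_{n,k} into cycles of K(n,k).
   Finally, at the first new minimum t+1 following a step t that is not one, x reads
   00 and f(x) reads 10 at t, t+1; that 0 of f(x) is matched to the 1 before it, so
   f^2(x) has a 1 at t+1 where x has a 0. *)

From mathcomp Require Import all_boot order ssralg ssrnum ssrint zify.
Set Implicit Arguments. Unset Strict Implicit. Unset Printing Implicit Defensive.
Import Order.TTheory.

Lemma unit_steps_ivt (g : nat -> int) a b v : a <= b ->
  (forall s, a <= s < b -> (-1 <= g s.+1 - g s <= 1)%R) ->
  (Num.min (g a) (g b) <= v <= Num.max (g a) (g b))%R ->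
  exists2 s, a <= s <= b & g s = v.
Proof.
elim: b => [|b IH] ab steps hv.
  by exists 0; [lia | move: ab hv; rewrite leqn0 => /eqP ->; lia].
case: (ltnP b a) => [ba | {}ab].
  have ea : a = b.+1 by lia.
  by exists b.+1; [lia | move: hv; rewrite ea; lia].
have := steps b ltac:(lia).
case: (boolP (Num.min (g a) (g b) <= v <= Num.max (g a) (g b))%R) => hb step_b.
  by have [s hs gs] := IH ab (fun s hs => steps s ltac:(lia)) hb; exists s => //; lia.
by exists b.+1 => //; lia.
Qed.

Lemma constant_steps (g : nat -> int) (c : int) a d :
  (forall s, a <= s < a + d -> g s.+1 = (g s + c)%R) -> g (a + d) = (g a + d%:Z * c)%R.
Proof.
elim: d => [|d IH] steps; first by rewrite addn0; lia.
rewrite addnS steps ?IH => [|s hs|]; [lia | apply: steps | ]; lia.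
Qed.

Lemma find_iota1 (P : pred nat) m L : 0 < L <= m -> P L ->
  (forall L', 0 < L' < L -> ~~ P L') -> find P (iota 1 m) = L.-1.
Proof.
move=> hL PL before_L.
have -> : m = L.-1 + (m - L.-1) by lia.
rewrite iotaD find_cat size_iota ifF; last first.
  by apply/hasPn => L'; rewrite mem_iota => hL'; apply: before_L; lia.
have -> : m - L.-1 = (m - L).+1 by lia.
by rewrite /= (_ : 1 + L.-1 = L) ?PL ?addn0 //; lia.
Qed.

Section Height.
Variables (n : nat) (x : n.-tuple bool).

Definition step (b : bool) : int := if b then 1%R else (-1)%R.

Definition height (t : nat) : int := (\sum_(0 <= s < t) step (cbit x s))%R.

Fixpoint minh (t : nat) : int :=
  if t is t'.+1 then Num.min (minh t') (height t) else height 0.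

Lemma height0 : height 0 = 0%R.
Proof. by rewrite /height big_geq. Qed.

Lemma heightS t : height t.+1 = (height t + step (cbit x t))%R.
Proof. by rewrite /height big_nat_recr. Qed.

Lemma height_step t : (-1 <= height t.+1 - height t <= 1)%R.
Proof. by rewrite heightS /step; case: cbit; lia. Qed.

Lemma cbitDn t : cbit x (t + n) = cbit x t.
Proof. by rewrite /cbit modnDr. Qed.

Lemma cbit_mod t : cbit x (t %% n) = cbit x t.
Proof. by rewrite /cbit modn_mod. Qed.

Lemma height_addn t : height (t + n) = (height t + height n)%R.
Proof.
elim: t => [|t IH]; first by rewrite add0n height0; lia.
by rewrite addSn !heightS IH cbitDn; lia.
Qed.

Lemma height_addmn t q : height (t + q * n) = (height t + q%:Z * height n)%R.
Proof.
elim: q => [|q IH]; first by rewrite mul0n addn0; lia.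
by rewrite mulSn (addnC n) addnA height_addn IH; lia.
Qed.

Lemma height_diff_mod a b l : a = b %[mod n] ->
  (height (a + l) - height a = height (b + l) - height b)%R.
Proof.
have reduce c : (height (c + l) - height c = height (c %% n + l) - height (c %% n))%R.
  have e : c = c %% n + c %/ n * n by rewrite addnC -divn_eq.
  by rewrite {1 2}e addnAC !height_addmn; lia.
by move=> ab; rewrite reduce ab -reduce.
Qed.

Lemma ones_in_height i l :
  (2 * (ones_in x i l)%:Z - l%:Z = height (i + l) - height i)%R.
Proof.
elim: l => [|l IH]; first by rewrite /ones_in big_geq // addn0; lia.
rewrite /ones_in big_nat_recr //= -/(ones_in x i l) addnS heightS.
by move: IH; rewrite /step; case: cbit; lia.
Qed.

Lemma height_count : height n = (2 * (count id x)%:Z - n%:Z)%R.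
Proof.
have := ones_in_height 0 n; rewrite add0n height0.
suff -> : ones_in x 0 n = count id x by lia.
rewrite -sum1_count (big_nth false) size_tuple big_mkcond /ones_in.
by apply: eq_big_nat => d /andP[_ dn]; rewrite /cbit modn_small //; case: nth.
Qed.

Lemma balancedE i l :
  balanced x i l = (0 < l <= n) && (height (i + l) == height i).
Proof.
rewrite /balanced; congr andb; have := ones_in_height i l.
by move=> e; apply/eqP/eqP; lia.
Qed.

Lemma minhS t : minh t.+1 = Num.min (minh t) (height t.+1).
Proof. by []. Qed.

Lemma minh_le t s : s <= t -> (minh t <= height s)%R.
Proof.
elim: t => [|t IH] st /=; first by move: st; rewrite leqn0 => /eqP ->; lia.
by case: (ltnP s t.+1) => st'; [have := IH ltac:(lia) | have -> : s = t.+1]; lia.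
Qed.

Lemma minh_attained t : exists2 s, s <= t & minh t = height s.
Proof.
elim: t => [|t [s st e]] /=; first by exists 0.
by rewrite e; case: (leP (height s) (height t.+1)) => hs; [exists s | exists t.+1]; lia.
Qed.

Lemma minh_leD t l : (minh (t + l) <= minh t)%R.
Proof.
by elim: l => [|l IH]; [rewrite addn0; lia | rewrite addnS /=; lia].
Qed.

Definition new_min t := (height t.+1 < minh t)%R.

Lemma new_min_down t : new_min t -> height t.+1 = (height t - 1)%R.
Proof. by rewrite /new_min; have := minh_le (leqnn t); have := height_step t; lia. Qed.

Lemma minh_stays t : ~~ new_min t -> minh t.+1 = minh t.
Proof. by rewrite /new_min -leNgt minhS; lia. Qed.

Lemma zeros_before_new_min t : ~~ new_min t -> new_min t.+1 ->
  cbit x t = false /\ cbit x t.+1 = false.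
Proof.
move=> old_t new_t1; have := new_min_down new_t1; have := minh_stays old_t.
move: new_t1; rewrite /new_min !heightS /step => + + _.
by have := minh_le (leqnn t); case: cbit; case: cbit; lia.
Qed.

End Height.

Section NegativeDrift.
Variables (n : nat) (x : n.-tuple bool).
Hypothesis drift : (height x n < 0)%R.

Local Notation H := (height x).
Local Notation M := (minh x).

Lemma drift_n_gt0 : 0 < n.
Proof.
by case: (posnP n) drift => // n0; rewrite /height big_geq ?n0.
Qed.

Lemma minh_window t : exists s, [/\ s <= t, t < s + n & M t = H s].
Proof.
have [s st e] := minh_attained x t; exists s; split => //.
rewrite ltnNge; apply/negP => ts.
by have := minh_le x ts; rewrite height_addn; lia.
Qed.

Lemma minh_addn t : n <= t -> M (t + n) = (M t + H n)%R.
Proof.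
move=> nt; have [s [st ts es]] := minh_window (t + n).
have [s0 s0t e0] := minh_attained x t.
have := minh_le x (ltac:(lia) : s0 + n <= t + n); rewrite height_addn.
have := minh_le x (ltac:(lia) : s - n <= t); have := height_addn x (s - n).
by rewrite subnK; lia.
Qed.

Lemma matched1E i : matched1 x i = cbit x i.
Proof.
rewrite /matched1; case xi: (cbit x i) => //=.
have [l hl e] : exists2 l, 1 <= l <= n & H (i + l) = H i.
  apply: (@unit_steps_ivt (fun l => H (i + l))) => [|s _|]; first exact: drift_n_gt0.
  - by rewrite addnS; apply: height_step.
  - by have := height_addn x i; rewrite addn1 heightS xi /step; lia.
by apply/hasP; exists l; rewrite ?mem_iota ?balancedE ?e ?eqxx; lia.
Qed.

Lemma cbit_fK t :
  cbit (fK x) t = if matched x (t %% n) then ~~ cbit x t else cbit x t.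
Proof.
have tn : t %% n < n by rewrite ltn_pmod ?drift_n_gt0.
by rewrite /cbit -[t %% n]/(nat_of_ord (Ordinal tn)) -!tnth_nth tnth_mktuple.
Qed.

Lemma match_pos_first a L : 0 < L <= n -> H (a + L) = H a ->
  (forall L', 0 < L' < L -> H (a + L') != H a) ->
  match_pos x (a %% n) = (a + L.-1) %% n.
Proof.
have shift l : (H (a %% n + l) - H (a %% n) = H (a + l) - H a)%R.
  exact/height_diff_mod/modn_mod.
move=> hL ret before; rewrite /match_pos (@find_iota1 _ _ L) //.
- by rewrite modnDml.
- by rewrite balancedE hL /=; apply/eqP; have := shift L; lia.
- move=> L' hL'; rewrite balancedE; apply/negP => /andP[_ /eqP e].
  by have := shift L'; move: (before L' hL') => /eqP; lia.
Qed.

Definition matched0 t := [exists i : 'I_n, matched1 x i && (match_pos x i == t %% n)].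

Lemma matched0_minh t : n <= t -> matched0 t -> (M t <= H t.+1)%R.
Proof.
move=> nt /existsP[i /andP[/andP[_ has_ret] /eqP]].
rewrite /match_pos; set m := find _ _ => im.
have m_lt : m < n by rewrite -[X in _ < X](size_iota 1 n) -has_find.
have := nth_find 0 has_ret; rewrite nth_iota // add1n balancedE -/m => /andP[_ /eqP ret].
have tmi : t - m = i %[mod n].
  by apply/eqP; rewrite -(eqn_modDr m) subnK ?im ?modn_mod //; lia.
have := height_diff_mod x m.+1 tmi; rewrite (_ : t - m + m.+1 = t.+1); last by lia.
by have := minh_le x (leq_subr m t); lia.
Qed.

Lemma minh_matched0 t : cbit x t = false -> (M t <= H t.+1)%R -> matched0 t.
Proof.
move=> xt Mt.
have Ht : H t.+1 = (H t - 1)%R by rewrite heightS xt.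
pose back L := [&& 0 < L <= n, L <= t.+1 & H (t.+1 - L) == H t.+1].
have back_at s : s <= t -> H s = H t.+1 -> t < s + n -> back (t.+1 - s).
  by move=> st es ts; rewrite /back (_ : t.+1 - (t.+1 - s) = s) ?es ?eqxx; lia.
(* The last visit [a] to the level [H t.+1] before [t.+1] is a 1 matched to [t]. *)
have [L0 back0] : exists L, back L.
  have [s [st ts es]] := minh_window t.
  have [s' hs' es'] := @unit_steps_ivt H s t (H t.+1) st
    (fun u _ => height_step x u) ltac:(lia).
  by exists (t.+1 - s'); apply: back_at => //; lia.
case: (ex_minnP (ex_intro _ L0 back0)) => L /and3P[hL Lt /eqP ret] minL.
set a := t.+1 - L in ret; have aL : a + L = t.+1 by lia.
have L_gt1 : 1 < L.
  case: (ltnP 1 L) => // L1; have at_ : a = t by lia.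
  by move: ret; rewrite at_; lia.
have xa : cbit x a.
  apply: contraT => /negbTE xa0.
  have := heightS x a; rewrite xa0 /= => Ha.
  have [s hs es] := @unit_steps_ivt H a.+1 t (H t.+1) ltac:(lia)
    (fun u _ => height_step x u) ltac:(lia).
  by have := minL _ (back_at s ltac:(lia) es ltac:(lia)); lia.
apply/existsP; exists (Ordinal (ltn_pmod a drift_n_gt0)).
rewrite /= matched1E cbit_mod xa (@match_pos_first a L) ?aL //.
- by rewrite (_ : a + L.-1 = t) //; lia.
- move=> L' hL'; apply/eqP => e.
  have := minL (L - L'); rewrite /back (_ : t.+1 - (L - L') = a + L') ?e ?ret ?eqxx; lia.
Qed.

Lemma cbit_fK_minh t : n <= t -> cbit (fK x) t = ~~ cbit x t && (M t <= H t.+1)%R.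
Proof.
move=> nt; rewrite cbit_fK /matched matched1E cbit_mod -/(matched0 t).
case: (boolP (cbit x t)) => //= /negbTE xt.
case: (boolP (matched0 t)) => [/(matched0_minh nt) -> // | unmatched].
by apply/esym/negbTE; apply: contra unmatched; exact: minh_matched0.
Qed.

Lemma height_fK t l : n <= t ->
  (height (fK x) (t + l) - height (fK x) t =
   (2 * M (t + l) - H (t + l)) - (2 * M t - H t))%R.
Proof.
move=> nt; elim: l => [|l IH]; first by rewrite addn0; lia.
rewrite addnS heightS cbit_fK_minh ?(leq_trans nt (leq_addr l t)) // minhS.
have := heightS x (t + l); have := minh_le x (leqnn (t + l)).
by move: IH; rewrite /step; case: cbit => /=; case: (leP (M (t + l)) (H (t + l).+1)); lia.
Qed.

Lemma count_fK : count id (fK x) = count id x.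
Proof.
have := height_fK n (leqnn n); rewrite minh_addn // !height_addn.
by have := height_count x; have := height_count (fK x); lia.
Qed.

Lemma fK_return t : n <= t -> cbit x t ->
  exists2 l, 0 < l <= n & height (fK x) (t + l) = height (fK x) t.
Proof.
move=> nt xt; have := matched1E t; rewrite /matched1 xt /= => /hasP[l0].
rewrite mem_iota balancedE => l0n /andP[_ /eqP ret0].
pose ret l := (0 < l <= n) && (H (t + l) == H t).
have ret_l0 : ret l0 by rewrite /ret ret0 eqxx; lia.
case: (ex_minnP (ex_intro _ l0 ret_l0)) => m /andP[hm /eqP retm] minm.
have Ht1 : H (t + 1) = (H t + 1)%R by rewrite addn1 heightS xt.
have above l : l <= m -> (H t <= H (t + l))%R.
  move=> lm; case: (leP (H t) (H (t + l))) => // below.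
  have l_gt0 : 0 < l by case: l lm below => // _; rewrite addn0; lia.
  have [s hs es] := @unit_steps_ivt H (t + 1) (t + l) (H t) ltac:(lia)
    (fun u _ => height_step x u) ltac:(lia).
  have ms : m <= s - t by apply: minm; rewrite /ret subnKC ?es ?eqxx ?andbT; lia.
  have st : s = t + l by lia.
  by move: es; rewrite st; lia.
have flat l : l <= m -> M (t + l) = M t.
  elim: l => [|l IH] lm; first by rewrite addn0.
  rewrite addnS minhS IH; last lia.
  by have := above l.+1 lm; rewrite addnS; have := minh_le x (leqnn t); lia.
by exists m => //; have := height_fK m nt; rewrite flat //; lia.
Qed.

Lemma fK_no_return t l : n <= t -> cbit x t = false -> cbit (fK x) t = false ->
  0 < l -> height (fK x) (t + l) != height (fK x) t.
Proof.
move=> nt xt yt l_gt0; move: yt; rewrite cbit_fK_minh // xt /= => /negbT.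
rewrite -ltNge => record; apply/eqP => e.
have := heightS x t; rewrite xt /= => Ht1.
have := minh_leD x t.+1 (l - 1); rewrite (_ : t.+1 + (l - 1) = t + l); last lia.
have := minh_le x (leqnn (t + l)); have := minh_le x (leqnn t).
by have := height_fK l nt; rewrite minhS; lia.
Qed.

Lemma cbit_from_fK t : n <= t -> cbit x t = ~~ cbit (fK x) t &&
  has (fun l => height (fK x) (t + l) == height (fK x) t) (iota 1 n).
Proof.
move=> nt; case: (boolP (cbit x t)) => [xt | /negbTE xt].
  rewrite cbit_fK_minh // xt /=; apply/esym/hasP.
  by have [l hl ret] := fK_return nt xt; exists l; rewrite ?mem_iota ?ret //; lia.
case: (boolP (cbit (fK x) t)) => //= /negbTE yt.
by apply/esym/hasPn => l; rewrite mem_iota => hl; apply: fK_no_return; lia.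
Qed.

Lemma not_new_min_exists : (- n%:Z < H n)%R -> exists2 t, n <= t & ~~ new_min x t.
Proof.
move=> Hn_gt; have [t t_in old_t] : exists2 t, t \in iota n n & ~~ new_min x t.
  apply/allPn/negP => /allP all_new.
  have steps s : n <= s < n + n -> H s.+1 = (H s + -1)%R.
    by move=> hs; rewrite new_min_down ?all_new ?mem_iota; lia.
  by have := constant_steps steps; rewrite height_addn; lia.
by exists t => //; move: t_in; rewrite mem_iota => /andP[].
Qed.

Lemma new_min_exists t0 : n <= t0 -> exists d, new_min x (t0 + d).
Proof.
move=> nt0; have [t t_in new_t] : exists2 t, t \in iota t0 n & new_min x t.
  apply/hasP; apply: contraT => /hasPn no_new.
  have steps s : t0 <= s < t0 + n -> M s.+1 = (M s + 0)%R.
    by move=> hs; rewrite minh_stays ?no_new ?mem_iota //; lia.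
  by have := constant_steps steps; rewrite minh_addn //; lia.
by exists (t - t0); move: t_in; rewrite mem_iota => /andP[t0t _]; rewrite subnKC.
Qed.

Lemma fK_10_above_0 : (- n%:Z < H n)%R ->
  exists t, [/\ n <= t, cbit (fK x) t, cbit (fK x) t.+1 = false & cbit x t.+1 = false].
Proof.
move=> Hn_gt; have [t0 nt0 old_t0] := not_new_min_exists Hn_gt.
case: (ex_minnP (new_min_exists nt0)) => d new_d first_d.
have d_gt0 : 0 < d by case: d new_d {first_d} => //; rewrite addn0 (negbTE old_t0).
have old_t : ~~ new_min x (t0 + d.-1) by apply/negP => /first_d; lia.
rewrite (_ : t0 + d = (t0 + d.-1).+1) in new_d; last lia.
have [xt xt1] := zeros_before_new_min old_t new_d.
exists (t0 + d.-1); split => //; first lia.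
- by rewrite cbit_fK_minh ?xt ?leNgt //; lia.
- by rewrite cbit_fK_minh ?xt1 ?leNgt ?(negbF new_d) //; lia.
Qed.

End NegativeDrift.

Lemma cbit_tnth n (z : n.-tuple bool) (i : 'I_n) : cbit z (i + n) = tnth z i.
Proof. by rewrite /cbit modnDr modn_small // (tnth_nth false). Qed.

Section OrbitPartition.
Variables (T : finType) (f : T -> T) (A : {set T}).
Hypotheses (fA : {homo f : x / x \in A}) (f_inj : {in A &, injective f}).

Lemma homo_inj_in_onto y : y \in A -> exists2 x, x \in A & f x = y.
Proof.
have fAA : f @: A = A.
  apply/eqP; rewrite eqEcard card_in_imset // leqnn andbT.
  by apply/subsetP => _ /imsetP[x xA ->]; exact: fA.
move=> yA; have /imsetP[x xA ->] : y \in f @: A by rewrite fAA.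
by exists x.
Qed.

Lemma orbit_sub_in x : x \in A -> {subset orbit f x <= A}.
Proof.
by move=> xA y; rewrite /orbit => /trajectP[i _ ->]; elim: i => //= i; exact: fA.
Qed.

Lemma cycle_orbit_rel (e : rel T) x :
  {in A, forall y, e y (f y)} -> x \in A -> cycle e (orbit f x).
Proof.
move=> e_f xA; apply: (sub_in_cycle (P := mem A) _ _ (cycle_orbit_in fA f_inj xA)).
  by move=> a b aA _ /eqP <-; exact: e_f.
by apply/allP; exact: orbit_sub_in.
Qed.

Lemma size_orbit_gt2 x : x \in A -> f x != x -> f (f x) != x -> 2 < size (orbit f x).
Proof.
move=> xA f1 f2; rewrite size_orbit.
have := iter_order_in fA f_inj xA; have := order_gt0 f x.
by case: (order f x) => [|[|[|o]]] // _ /= e; [move: f1 | move: f2]; rewrite e eqxx.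
Qed.

Lemma orbit_partition : partition [set [set y in orbit f x] | x in A] A.
Proof.
have -> : [set [set y in orbit f x] | x in A] = equivalence_partition (fconnect f) A.
  apply: eq_in_imset => x xA; apply/setP => y.
  rewrite !inE -fconnect_orbit andb_idl // => xy.
  by apply: (orbit_sub_in xA); rewrite -fconnect_orbit.
apply: equivalence_partitionP => a b c aA bA cA; split; first exact: connect0.
move=> ab; apply/idP/idP; last exact: connect_trans.
by apply: connect_trans; rewrite (fconnect_sym_in fA f_inj bA aA).
Qed.

End OrbitPartition.

Section KneserMap.
Variables k n : nat.
Hypotheses (k_gt0 : 0 < k) (nk : 2 * k + 1 <= n).
Local Notation X := (Xnk n k).

Lemma Xnk_height x : x \in X -> (- n%:Z < height x n < 0)%R.
Proof. by rewrite inE => /eqP cx; rewrite height_count cx; lia. Qed.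

Lemma Xnk_drift x : x \in X -> (height x n < 0)%R.
Proof. by case/Xnk_height/andP. Qed.

Lemma fK_Xnk : {homo @fK n : x / x \in X}.
Proof. by move=> x xX; rewrite inE count_fK ?Xnk_drift //; rewrite inE in xX. Qed.

Lemma kadj_fK x : x \in X -> kadj x (fK x).
Proof.
move=> xX; apply/forallP => i.
by rewrite -!cbit_tnth cbit_fK_minh ?Xnk_drift ?leq_addl //; case: cbit.
Qed.

Lemma fK_neq x : x \in X -> fK x != x.
Proof.
move=> xX; apply: contraTneq (kadj_fK xX) => ->.
have : has id x by rewrite has_count; move: xX; rewrite inE => /eqP ->.
by case/hasP => _ /tnthP[i ->] xi; apply/forallPn; exists i; rewrite xi.
Qed.

Lemma fK2_neq x : x \in X -> fK (fK x) != x.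
Proof.
move=> xX; have yX := fK_Xnk xX.
have [t [nt yt yt1 xt1]] := fK_10_above_0 (Xnk_drift xX) (proj1 (andP (Xnk_height xX))).
apply/eqP => fKK; move: xt1; rewrite -{1}fKK cbit_fK_minh ?Xnk_drift ?yt1 //=; last lia.
rewrite !heightS yt yt1 /step => /negbT; rewrite -ltNge.
by have := minh_le (fK x) (leqnn t); lia.
Qed.

Lemma fK_inj : {in X &, injective (@fK n)}.
Proof.
move=> x1 x2 x1X x2X e; apply: eq_from_tnth => i.
rewrite -!cbit_tnth (cbit_from_fK (Xnk_drift x1X) (leq_addl i n)).
by rewrite (cbit_from_fK (Xnk_drift x2X) (leq_addl i n)) e.
Qed.

End KneserMap.

Theorem mainTheorem6 (k n : nat) (hk : 1 <= k) (hn : 2 * k + 1 <= n) :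
  [/\ [/\ {in Xnk n k, forall x, fK x \in Xnk n k},
      {in Xnk n k &, injective (@fK n)} &
      {in Xnk n k, forall y, exists2 x, x \in Xnk n k & fK x = y}],
      {in Xnk n k, forall x,
         [/\ kadj x (fK x), fK x != x & fK (fK x) != x]},
      {in Xnk n k, forall x,
         [/\ fcycle (@fK n) (orbit (@fK n) x),
             uniq (orbit (@fK n) x),
             3 <= size (orbit (@fK n) x),
             {subset orbit (@fK n) x <= Xnk n k} &
             cycle (@kadj n) (orbit (@fK n) x)]} &
      partition [set [set y in orbit (@fK n) x] | x in Xnk n k] (Xnk n k)].
Proof.
have fX := fK_Xnk hk hn; have f_inj := fK_inj hk hn.
have f1 := fK_neq hk hn; have f2 := fK2_neq hk hn; have adj := kadj_fK hk hn.
split => [|x xX|x xX|]; last exact: orbit_partition.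
- by split => //; exact: homo_inj_in_onto.
- by split; [exact: adj | exact: f1 | exact: f2].
split; first exact: (cycle_orbit_in fX f_inj xX).
- exact: orbit_uniq.
- exact: size_orbit_gt2 fX f_inj x xX (f1 x xX) (f2 x xX).
- exact: orbit_sub_in fX x xX.
- exact: (cycle_orbit_rel fX f_inj adj xX).
Qed.
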